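(* Suppose $\mathcal{H}_\kappa(L_1,L_2)$ is regular. Let $s\in S$ and let $A_s\xrightarrow{w}F$ be a path in $\mathcal{A}$ from $A_s$ to a final state $F$. Then $w$ is a prefix of some word in $v_s^+$. In addition, the word $v_s$ is uniquely determined, and the loop $A_s\xrightarrow{v_s}A_s$ visits every state $B\in s\setminus\{A_s\}$ exactly once; thus it is a Hamiltonian cycle of $s$ and $|v_s|=N_s$.
   Context: $\Sigma$ is a finite alphabet with at least two letters with an involution $a\mapsto\bar a$ ($\bar{\bar a}=a$), extended to words by $\overline{a_1\cdots a_m}=\bar a_m\cdots\bar a_1$ and to languages elementwise. $\kappa$ is a fixed positive integer. $\mathcal{H}_\kappa(L_1,L_2)=\{\gamma\alpha\beta\bar\alpha\bar\gamma:|\alpha|\ge\kappa,\ \gamma\alpha\beta\bar\alpha\in L_1\text{ or }\alpha\beta\bar\alpha\bar\gamma\in L_2\}$. $L_1,L_2$ are regular; $\mathcal{A}_1=(Q_1,\Sigma,E_1,\{q_{01}\},F_1)$ is a complete DFA accepting $L_1$, $\mathcal{A}_2=(Q_2,\Sigma,E_2,\{q_{02}\},F_2)$ a complete DFA accepting $\overline{L_2}$; $p\cdot w$ is the state reached from $p$ on $w$. Construction of $\mathcal{A}$: $Q_{12}=\{(q_{01}\cdot w,q_{02}\cdot w):w\in\Sigma^*\}$ with $(p_1,p_2)\cdot w=(p_1\cdot w,p_2\cdot w)$. For $(p_1,p_2,q_1,q_2)\in Q_1\times Q_2\times Q_1\times Q_2$ let $B(p_1,p_2,q_1,q_2)=\{w:p_1\cdot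 w=q_1,\ p_2\cdot\bar w=q_2\}$; the quadruple is a basic bridge if this set is nonempty. States of $\mathcal{A}$ are all $((p_1,p_2),q_1,q_2,\ell)$ with $(p_1,p_2)\in Q_{12}$, $q_i\in Q_i$, $\ell\in\{0,\dots,\kappa\}$, $(p_1,p_2,q_1,q_2)$ a basic bridge. For $a\in\Sigma$, $P\in Q_{12}$, $q_i\in Q_i$, there is an $a$-arc from $(P,q_1\cdot\bar a,q_2\cdot\bar a,\ell)$ to $(P\cdot a,q_1,q_2,\ell')$, provided both are states, exactly when: $\ell=\ell'=0$ and $q_1\cdot\bar a\notin F_1$, $q_2\cdot\bar a\notin F_2$; or $\ell=0,\ell'=1$ and ($q_1\cdot\bar a\in F_1$ or $q_2\cdot\bar a\in F_2$); or $1\le\ell<\kappa$ and $\ell'=\ell+1$. Initial states: $((q_{01},q_{02}),q_1',q_2',0)$; final states: those with $\ell=\kappa$. $\mathcal{A}$ is trimmed: states not reachable from an initial state, or from which no final state is reachable, are removed. $S$ is the set of non-trivial strongly connected components of $\mathcal{A}$, i.e. those containing a path $A\xrightarrow{v}A$ with $v$ nonempty; for $s\in S$, $N_s$ is the number of states in $s$. A linear order on the states of $\mathcal{A}$ is fixed; $A_s$ is the least state in $s$, and $v_s$ is a shortest nonempty word with a path $A_s\xrightarrow{v_s}A_s$. *)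

From mathcomp Require Import all_boot.
Set Implicit Arguments. Unset Strict Implicit. Unset Printing Implicit Defensive.

Record dfa (Sigma : finType) := Dfa {
  dstate : finType;
  dinit : dstate;
  ddelta : dstate -> Sigma -> dstate;
  dfinal : {set dstate} }.

Section Words.
Variable Sigma : finType.
Variable bar : Sigma -> Sigma.

Definition wbar (w : seq Sigma) : seq Sigma := rev (map bar w).

Definition lang := seq Sigma -> Prop.

Definition lbar (L : lang) : lang := fun w => exists u, L u /\ w = wbar u.

Definition dtrans (A : dfa Sigma) (p : dstate A) (w : seq Sigma) : dstate A :=
  foldl (@ddelta _ A) p w.

Definition dlang (A : dfa Sigma) : lang :=
  fun w => dtrans (dinit A) w \in dfinal A.

Definition regular (L : lang) : Prop :=
  exists B : dfa Sigma, forall w, L w <-> dlang B w.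

Definition Hk (kappa : nat) (L1 L2 : lang) : lang := fun x =>
  exists g al be : seq Sigma,
    x = g ++ al ++ be ++ wbar al ++ wbar g /\ kappa <= size al /\
    (L1 (g ++ al ++ be ++ wbar al) \/ L2 (al ++ be ++ wbar al ++ wbar g)).

(* Generic runs of a (nondeterministic) labelled graph: xs = states after each letter *)
Fixpoint grun (T : Type) (node : T -> Prop) (arc : Sigma -> T -> T -> Prop)
    (X : T) (w : seq Sigma) (xs : seq T) : Prop :=
  match w, xs with
  | [::], [::] => node X
  | a :: w', Y :: xs' => arc a X Y /\ grun node arc Y w' xs'
  | _, _ => False
  end.

Definition gpath (T : Type) (node : T -> Prop) (arc : Sigma -> T -> T -> Prop)
    (X : T) (w : seq Sigma) (Y : T) : Prop :=
  exists xs, grun node arc X w xs /\ last X xs = Y.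

Section Construction.
Variables (kappa : nat) (A1 A2 : dfa Sigma).

Definition St : finType :=
  ((dstate A1 * dstate A2) * dstate A1 * dstate A2 * 'I_kappa.+1)%type.

Definition inQ12 (p1 : dstate A1) (p2 : dstate A2) : Prop :=
  exists w, p1 = dtrans (dinit A1) w /\ p2 = dtrans (dinit A2) w.

Definition basic_bridge (p1 : dstate A1) (p2 : dstate A2)
    (q1 : dstate A1) (q2 : dstate A2) : Prop :=
  exists w, dtrans p1 w = q1 /\ dtrans p2 (wbar w) = q2.

Definition isState (X : St) : Prop :=
  let: (P, q1, q2, l) := X in inQ12 P.1 P.2 /\ basic_bridge P.1 P.2 q1 q2.

Definition rawarc (a : Sigma) (X Y : St) : Prop :=
  isState X /\ isState Y /\
  let: (P, r1, r2, l) := X in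
  let: (P', q1, q2, l') := Y in
  P' = (ddelta P.1 a, ddelta P.2 a) /\
  r1 = ddelta q1 (bar a) /\ r2 = ddelta q2 (bar a) /\
  [\/ [/\ val l = 0, val l' = 0, r1 \notin dfinal A1 & r2 \notin dfinal A2],
      [/\ val l = 0, val l' = 1 & (r1 \in dfinal A1) || (r2 \in dfinal A2)]
    | [/\ 1 <= val l, val l < kappa & val l' = (val l).+1]].

Definition initialSt (X : St) : Prop :=
  isState X /\ X.1.1.1 = (dinit A1, dinit A2) /\ val X.2 = 0.

Definition finalSt (X : St) : Prop := val X.2 = kappa.

Definition upath := gpath isState rawarc.

Definition inA (X : St) : Prop :=
  (exists I w, initialSt I /\ upath I w X) /\
  (exists F w, finalSt F /\ upath X w F).

Definition arcA (a : Sigma) (X Y : St) : Prop := inA X /\ inA Y /\ rawarc a X Y.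

Definition runA := grun inA arcA.
Definition pathA := gpath inA arcA.
Definition reachA (X Y : St) : Prop := exists w, pathA X w Y.

Definition sccA (s : {set St}) : Prop :=
  exists X, inA X /\ forall Y, Y \in s <-> (reachA X Y /\ reachA Y X).

Definition nontrivial_sccA (s : {set St}) : Prop :=
  sccA s /\ exists X v, X \in s /\ v != [::] /\ pathA X v X.

Definition shortest_loop (X : St) (v : seq Sigma) : Prop :=
  v != [::] /\ pathA X v X /\
  forall u, u != [::] -> pathA X u X -> size v <= size u.

End Construction.
End Words.

From mathcomp Require Import all_boot zify.
Set Implicit Arguments. Unset Strict Implicit. Unset Printing Implicit Defensive.

(* Let X be a state of A with a loop X -v-> X, reached from an initial state
   by u, and let X -w-> F with F final.  A bridge word beta at F completes
   every x_m = u v^m w to a word x_m beta bar(x_m) of H_kappa, with alpha the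
   last kappa letters of x_m, where the counter of A starts.  A DFA for
   H_kappa identifies u v^(ci) with u v^(cj) for some i < j, so it also accepts
   x_(cj) beta bar(x_(ci)).  As no bridge state of A is final more than kappa
   letters before the end, any decomposition gamma alpha beta' bar(alpha)
   bar(gamma) of that word has gamma alpha covering x_(ci), and comparing it
   with its mirror image makes w a prefix of a power of v.
   For a shortest loop v_s at A_s, this turns every loop through A_s into a
   power of v_s; since runs of A are determined by their label and endpoints,
   the run of v_s visits every state of the component, without repetition by
   minimality. *)

Section Runs.
Variables (Sigma : finType) (T : Type) (node : T -> Prop) (arc : Sigma -> T -> T -> Prop).
Hypothesis arc_node : forall a X Y, arc a X Y -> node X /\ node Y.
Local Notation run := (grun node arc).
Local Notation path := (gpath node arc).

Lemma grun_size X w xs : run X w xs -> size xs = size w.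
Proof. by elim: w X xs => [|a w IH] X [|Y xs] //= [_ /IH ->]. Qed.

Lemma grun_node X w xs : run X w xs -> node X.
Proof. by case: w xs => [|a w] [|Y xs] //= [/arc_node[]]. Qed.

Lemma grun_cat X w1 w2 xs1 xs2 : size xs1 = size w1 ->
  run X (w1 ++ w2) (xs1 ++ xs2) <-> run X w1 xs1 /\ run (last X xs1) w2 xs2.
Proof.
elim: w1 X xs1 => [|a w1 IH] X [|Y xs1] //= => [_|[/IH E]].
  by split=> [H|[]//]; split=> //; apply: grun_node H.
split=> [[Ha /E[H1 H2]]|[[Ha H1] H2]] //.
by split=> //; apply/E.
Qed.

Lemma grun_rcons X w a ys Z : run X (rcons w a) (rcons ys Z) ->
  run X w ys /\ arc a (last X ys) Z.
Proof.
move=> H; have /eqP : size (rcons ys Z) = size (rcons w a) by apply: grun_size H.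
rewrite !size_rcons eqSS => /eqP size_ys.
by rewrite -!cats1 in H; case/(grun_cat _ _ _ size_ys): H => ? [].
Qed.

Lemma grun_split X w xs k : run X w xs -> k < size xs ->
  exists w1 w2, [/\ w = w1 ++ w2, size w1 = k.+1, path X w1 (nth X xs k),
     run (nth X xs k) w2 (drop k.+1 xs) & last (nth X xs k) (drop k.+1 xs) = last X xs].
Proof.
move=> H lt_k; have size_xs := grun_size H.
have size_take : size (take k.+1 xs) = size (take k.+1 w) by rewrite !size_takel // -size_xs.
have last_take : last X (take k.+1 xs) = nth X xs k.
  by rewrite (last_nth X) size_takel //= nth_take.
rewrite -(cat_take_drop k.+1 w) -(cat_take_drop k.+1 xs) in H.
case/(grun_cat _ _ _ size_take): H => H1 H2.
exists (take k.+1 w), (drop k.+1 w); rewrite -last_take; split=> //.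
- by rewrite cat_take_drop.
- by rewrite size_takel // -size_xs.
- by exists (take k.+1 xs).
- by rewrite -last_cat cat_take_drop.
Qed.

Lemma grun_loop_pow X w xs k : node X -> run X w xs -> last X xs = X ->
  run X (flatten (nseq k w)) (flatten (nseq k xs)) /\ last X (flatten (nseq k xs)) = X.
Proof.
move=> HX H E; elim: k => [|k [IH1 IH2]] //=.
by rewrite last_cat E; split=> //; apply/grun_cat; [apply: grun_size H | rewrite E].
Qed.

Lemma gpath_cat X w1 w2 Y Z : path X w1 Y -> path Y w2 Z -> path X (w1 ++ w2) Z.
Proof.
case=> xs1 [H1 <-] [xs2 [H2 <-]]; exists (xs1 ++ xs2).
by rewrite last_cat; split=> //; apply/grun_cat; first exact: grun_size H1.
Qed.

Lemma gpath_split X w1 w2 Z : path X (w1 ++ w2) Z ->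
  exists Y, path X w1 Y /\ path Y w2 Z.
Proof.
case=> xs [H <-]; have size_xs := grun_size H; rewrite size_cat in size_xs.
have size_take : size (take (size w1) xs) = size w1 by rewrite size_takel // size_xs leq_addr.
move: H; rewrite -(cat_take_drop (size w1) xs) => /(grun_cat _ _ _ size_take)[H1 H2].
exists (last X (take (size w1) xs)); split; first by exists (take (size w1) xs).
by exists (drop (size w1) xs); rewrite last_cat.
Qed.

Lemma gpath_nil X Y : path X [::] Y -> X = Y.
Proof. by case=> [[|Z xs] []] //= _ <-. Qed.

Lemma gpath_cons X a w Z : path X (a :: w) Z <-> exists Y, arc a X Y /\ path Y w Z.
Proof.
split=> [[[|Y xs] []] //= [Ha H] <-|[Y [Ha [xs [H <-]]]]]; last by exists (Y :: xs).
by exists Y; split=> //; exists xs.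
Qed.

Lemma gpath_start X w Y : path X w Y -> node X.
Proof. by case=> xs [/grun_node]. Qed.

Lemma gpath_end X w Y : path X w Y -> node Y.
Proof.
case=> xs [H <-]; elim: w X xs H => [|a w IH] X [|Z xs] //= [_]; exact: IH.
Qed.

Lemma gpath_loop_pow X w k : path X w X -> path X (flatten (nseq k w)) X.
Proof.
case=> xs [H E]; have [run_k last_k] := grun_loop_pow k (grun_node H) H E.
by exists (flatten (nseq k xs)).
Qed.

End Runs.

Lemma grun_mono (Sigma : finType) (T : Type) (node node' : T -> Prop)
    (arc arc' : Sigma -> T -> T -> Prop) :
  (forall X, node X -> node' X) -> (forall a X Y, arc a X Y -> arc' a X Y) ->
  forall X w xs, grun node arc X w xs -> grun node' arc' X w xs.
Proof.
move=> Hn Ha X w; elim: w X => [|a w IH] X [|Y xs] //=; first exact: Hn.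
by case=> /Ha H1 /IH H2.
Qed.

Lemma size_flatten_nseq (T : Type) (s : seq T) k : size (flatten (nseq k s)) = k * size s.
Proof. by rewrite size_flatten /shape map_nseq sumn_nseq mulnC. Qed.

Lemma mem_flatten_nseq (T : eqType) (x : T) (s : seq T) k : 0 < k ->
  (x \in flatten (nseq k s)) = (x \in s).
Proof. by move=> k_gt0; rewrite -mem_undup undup_flatten_nseq // mem_undup. Qed.

Lemma prefix_flatten_nseq (T : eqType) (x t : seq T) n k :
  prefix x (flatten (nseq n t)) -> size x = k * size t -> x = flatten (nseq k t).
Proof.
move=> pre size_x; have size_pow := size_flatten_nseq t.
have [t0|t_gt0] := posnP (size t).
  by move: size_x; rewrite t0 muln0 => /size0nil ->; move/size0nil: t0 => ->; elim: k.
have le_kn : k <= n by rewrite -(leq_pmul2r t_gt0) -size_x -size_pow size_prefix.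
move: pre; rewrite -(subnKC le_kn) nseqD flatten_cat prefixE takel_cat.
  by rewrite size_x -size_pow take_size => /eqP.
by rewrite size_x size_pow.
Qed.

Lemma catr_cancel (T : Type) (s1 s2 t1 t2 : seq T) :
  size t1 = size t2 -> s1 ++ t1 = s2 ++ t2 -> s1 = s2.
Proof.
move=> size_t E; have size_s : size s1 = size s2.
  by apply/(@addIn (size t1)); rewrite -size_cat E size_cat size_t.
by move/(congr1 (take (size s1))): E; rewrite take_size_cat // take_size_cat.
Qed.

Lemma fin_collision (T : finType) (f : nat -> T) : exists i j, i < j /\ f i = f j.
Proof.
have : ~~ uniq (map f (iota 0 #|T|.+1)).
  apply/negP => /card_uniqP card_s; have := max_card (mem (map f (iota 0 #|T|.+1))).
  by rewrite card_s size_map size_iota ltnn.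
case/(uniqPn (f 0)) => i [j []]; rewrite size_map size_iota => lt_ij lt_j.
rewrite !(nth_map 0) ?size_iota ?(ltn_trans lt_ij) // !nth_iota ?(ltn_trans lt_ij) //.
by exists i, j.
Qed.

Section Alphabet.
Variables (Sigma : finType) (bar : Sigma -> Sigma).
Hypothesis barK : involutive bar.
Local Notation wb := (wbar bar).

Lemma dtrans_cat (A : dfa Sigma) (p : dstate A) w1 w2 :
  dtrans p (w1 ++ w2) = dtrans (dtrans p w1) w2.
Proof. exact: foldl_cat. Qed.

Lemma dtrans_rcons (A : dfa Sigma) (p : dstate A) w a :
  dtrans p (rcons w a) = ddelta (dtrans p w) a.
Proof. exact: foldl_rcons. Qed.

Lemma dlang_cat_congr (B : dfa Sigma) p q z :
  dtrans (dinit B) p = dtrans (dinit B) q -> dlang B (p ++ z) -> dlang B (q ++ z).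
Proof. by rewrite /dlang !dtrans_cat => ->. Qed.

Lemma wbar_cons a w : wb (a :: w) = rcons (wb w) (bar a).
Proof. by rewrite /wbar rev_cons. Qed.

Lemma wbar_cat w1 w2 : wb (w1 ++ w2) = wb w2 ++ wb w1.
Proof. by rewrite /wbar map_cat rev_cat. Qed.

Lemma size_wbar w : size (wb w) = size w.
Proof. by rewrite size_rev size_map. Qed.

Lemma wbarK : involutive wb.
Proof. by move=> x; rewrite /wbar map_rev revK -map_comp (eq_map barK) map_id. Qed.

Lemma take_wbar_mirror g al be n : n <= size (g ++ al) ->
  take n (wb (g ++ al ++ be ++ wb al ++ wb g)) = take n (g ++ al ++ be ++ wb al ++ wb g).
Proof.
by move=> le_n; rewrite !wbar_cat !wbarK !catA -!(catA (g ++ al)) !(takel_cat _ le_n).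
Qed.

Section Construction.
Variables (kappa : nat) (A1 A2 : dfa Sigma).
Local Notation St := (St kappa A1 A2).
Local Notation isState := (@isState _ bar kappa A1 A2).
Local Notation rawarc := (@rawarc _ bar kappa A1 A2).
Local Notation upath := (gpath isState rawarc).

Definition st_pair (X : St) := X.1.1.1.
Definition st_q1 (X : St) := X.1.1.2.
Definition st_q2 (X : St) := X.1.2.
Definition st_level (X : St) : nat := X.2.

Lemma st_eq (X Y : St) : st_pair X = st_pair Y -> st_q1 X = st_q1 Y ->
  st_q2 X = st_q2 Y -> st_level X = st_level Y -> X = Y.
Proof.
case: X Y => [[[P r1] r2] l] [[[P' r1'] r2'] l'].
by rewrite /st_pair /st_q1 /st_q2 /st_level /= => -> -> -> /val_inj ->.
Qed.

Lemma st_level_le (X : St) : st_level X <= kappa.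
Proof. by rewrite -ltnS ltn_ord. Qed.

Lemma isState_bridge Y : isState Y ->
  exists beta, dtrans (st_pair Y).1 beta = st_q1 Y /\ dtrans (st_pair Y).2 (wb beta) = st_q2 Y.
Proof. by case: Y => [[[P r1] r2] l] [_ [beta [E1 E2]]]; exists beta. Qed.

Lemma rawarcP a X Y : rawarc a X Y ->
  [/\ isState X, isState Y,
      st_pair Y = (ddelta (st_pair X).1 a, ddelta (st_pair X).2 a),
      st_q1 X = ddelta (st_q1 Y) (bar a) /\ st_q2 X = ddelta (st_q2 Y) (bar a) &
      [\/ [/\ st_level X = 0, st_level Y = 0,
              st_q1 X \notin dfinal A1 & st_q2 X \notin dfinal A2],
          [/\ st_level X = 0, st_level Y = 1 &
              (st_q1 X \in dfinal A1) || (st_q2 X \in dfinal A2)]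
        | [/\ 1 <= st_level X & st_level Y = (st_level X).+1]]].
Proof.
case: X Y => [[[P r1] r2] l] [[[P' r1'] r2'] l'].
rewrite /rawarc /st_pair /st_q1 /st_q2 /st_level /= => -[HX [HY [EP [E1 [E2 H]]]]].
subst; split=> //; case: H => [[-> -> ? ?]|[-> -> ?]|[? _ ->]];
  by [constructor 1 | constructor 2 | constructor 3].
Qed.

Lemma rawarc_state a X Y : rawarc a X Y -> isState X /\ isState Y.
Proof. by case/rawarcP. Qed.

Lemma rawarc_level a X Y : rawarc a X Y -> st_level X = (st_level Y).-1.
Proof. by case/rawarcP => _ _ _ _ [[-> ->]|[-> ->]|[_ ->]]. Qed.

Lemma upath_cat X w1 w2 Y Z : upath X w1 Y -> upath Y w2 Z -> upath X (w1 ++ w2) Z.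
Proof. exact: (@gpath_cat _ _ _ _ rawarc_state). Qed.

Lemma upath_split X w1 w2 Z : upath X (w1 ++ w2) Z -> exists Y, upath X w1 Y /\ upath Y w2 Z.
Proof. exact: (@gpath_split _ _ _ _ rawarc_state). Qed.

Lemma upath_pair X w Y : upath X w Y ->
  st_pair Y = (dtrans (st_pair X).1 w, dtrans (st_pair X).2 w).
Proof.
elim: w X => [|a w IH] X.
  by move=> H; rewrite (gpath_nil H); case: (st_pair Y).
by case/gpath_cons => Z [/rawarcP[_ _ EZ _ _] /IH ->]; rewrite EZ.
Qed.

Lemma upath_bridge X w Y : upath X w Y ->
  st_q1 X = dtrans (st_q1 Y) (wb w) /\ st_q2 X = dtrans (st_q2 Y) (wb w).
Proof.
elim: w X => [|a w IH] X; first by move=> H; rewrite (gpath_nil H).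
case/gpath_cons => Z [/rawarcP[_ _ _ [-> ->] _] /IH[-> ->]].
by rewrite wbar_cons !dtrans_rcons.
Qed.

Lemma upath_level X w Y : upath X w Y ->
  st_level Y <= st_level X + size w /\
  (0 < st_level X -> st_level Y = st_level X + size w).
Proof.
elim: w X => [|a w IH] X; first by move=> H; rewrite (gpath_nil H) addn0.
case/gpath_cons => Z [/rawarcP[_ _ _ _ H] /IH[le_Y eq_Y]] /=.
case: H => [[-> EZ _ _]|[-> EZ _]|[_ EZ]]; rewrite EZ in le_Y eq_Y.
- by split=> //; lia.
- by have := eq_Y isT; lia.
- by have := eq_Y (ltn0Sn _); lia.
Qed.

Lemma upath_long_not_final X w F : upath X w F -> kappa < size w ->
  st_q1 X \notin dfinal A1 /\ st_q2 X \notin dfinal A2.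
Proof.
case: w => [|a w] //= /gpath_cons[Y [/rawarcP[_ _ _ _ H] HY]] lt_kappa.
have [_ eq_F] := upath_level HY; have := st_level_le F.
case: H => [[_ _ -> ->] //|[_ EY _]|[_ EY]]; rewrite eq_F EY //; lia.
Qed.

Lemma upath_final_switch Y al F : 0 < kappa -> upath Y al F -> size al = kappa ->
  st_level F = kappa -> (st_q1 Y \in dfinal A1) || (st_q2 Y \in dfinal A2).
Proof.
case: al => [|a al] kappa_gt0 /=; first by move=> _ E; move: kappa_gt0; rewrite -E.
case/gpath_cons => Z [/rawarcP[_ _ _ _ H] HZ] size_al F_final.
have [le_F eq_F] := upath_level HZ.
case: H => [[_ EZ _ _]|[_ _ ->] //|[lvY_gt0 EZ]]; rewrite EZ in le_F eq_F.
  by rewrite F_final -size_al add0n ltnn in le_F.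
by have := eq_F isT; lia.
Qed.

Section Pumping.
Hypothesis kappa_gt0 : 0 < kappa.
Variables (I X F : St) (u v w beta : seq Sigma).
Hypotheses (I_init : initialSt bar I) (path_u : upath I u X) (path_v : upath X v X)
  (path_w : upath X w F) (F_final : st_level F = kappa)
  (beta1 : dtrans (st_pair F).1 beta = st_q1 F)
  (beta2 : dtrans (st_pair F).2 (wb beta) = st_q2 F).
Local Notation H := (Hk bar kappa (dlang A1) (lbar bar (dlang A2))).

Definition pump m := u ++ flatten (nseq m v) ++ w.

Lemma upath_pump m : upath I (pump m) F.
Proof. exact: upath_cat path_u (upath_cat (gpath_loop_pow rawarc_state m path_v) path_w). Qed.

Lemma pump_pair m : st_pair F = (dtrans (dinit A1) (pump m), dtrans (dinit A2) (pump m)).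
Proof. by rewrite (upath_pair (upath_pump m)) /st_pair; case: I_init => _ [-> _]. Qed.

Lemma dtrans_pump1 m z : dtrans (dinit A1) (pump m ++ beta ++ z) = dtrans (st_q1 F) z.
Proof. by rewrite -beta1 (pump_pair m) -!dtrans_cat catA. Qed.

Lemma dtrans_pump2 m z : dtrans (dinit A2) (pump m ++ wb beta ++ z) = dtrans (st_q2 F) z.
Proof. by rewrite -beta2 (pump_pair m) -!dtrans_cat catA. Qed.

Lemma kappa_le_size_pump m : kappa <= size (pump m).
Proof.
have [le_F _] := upath_level (upath_pump m); case: I_init => _ [_ I0].
by move: le_F; rewrite F_final /st_level I0.
Qed.

Lemma pump_drop_not_final m g : g + kappa < size (pump m) ->
  dtrans (st_q1 F) (wb (drop g (pump m))) \notin dfinal A1 /\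
  dtrans (st_q2 F) (wb (drop g (pump m))) \notin dfinal A2.
Proof.
move=> lt_g; have := upath_pump m; rewrite -{1}(cat_take_drop g (pump m)).
case/upath_split => Y [_ HY]; have [<- <-] := upath_bridge HY.
by apply: upath_long_not_final HY _; rewrite size_drop; lia.
Qed.

Lemma pump_in_Hk m : H (pump m ++ beta ++ wb (pump m)).
Proof.
set k := size (pump m) - kappa.
have size_al : size (drop k (pump m)) = kappa.
  by rewrite size_drop /k; have := kappa_le_size_pump m; lia.
exists (take k (pump m)), (drop k (pump m)), beta; split.
  by rewrite [RHS]catA cat_take_drop -wbar_cat cat_take_drop.
split; first by rewrite size_al.
have := upath_pump m; rewrite -{1}(cat_take_drop k (pump m)).
case/upath_split => Y [_ HY]; have [E1 E2] := upath_bridge HY.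
case/orP: (upath_final_switch kappa_gt0 HY size_al F_final) => Y_final.
  by left; rewrite /dlang catA cat_take_drop dtrans_pump1 -E1.
right; exists (pump m ++ wb beta ++ wb (drop k (pump m))); split.
  by rewrite /dlang dtrans_pump2 -E2.
by rewrite -wbar_cat cat_take_drop !wbar_cat !wbarK catA.
Qed.

(* If gamma alpha ended before [pump m] does, the witness of membership in L1 or
   in the mirror of L2 would be a final bridge state more than kappa letters
   before F. *)
Lemma pump_mixed_cover m n g al be :
  size (pump m) <= size (pump n) ->
  pump n ++ beta ++ wb (pump m) = g ++ al ++ be ++ wb al ++ wb g ->
  dlang A1 (g ++ al ++ be ++ wb al) \/ lbar bar (dlang A2) (al ++ be ++ wb al ++ wb g) ->
  size (pump m) <= size g + kappa.
Proof.
move=> le_mn E in_L; rewrite leqNgt; apply/negP => lt_g.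
case: in_L => [in_L1|[z [in_L2 Ez]]].
  have {}E : g ++ al ++ be ++ wb al = pump n ++ beta ++ wb (drop (size g) (pump m)).
    apply: (@catr_cancel _ _ _ (wb g) (wb (take (size g) (pump m)))).
      by rewrite !size_wbar size_takel //; lia.
    by rewrite -!catA -E -wbar_cat cat_take_drop /pump -!catA.
  have [not_final _] := pump_drop_not_final lt_g.
  by move: in_L1; rewrite /dlang E dtrans_pump1 (negbTE not_final).
have {}E : z = pump m ++ wb beta ++ wb (drop (size g) (pump n)).
  apply: (@catr_cancel _ _ _ (wb g) (wb (take (size g) (pump n)))).
    by rewrite !size_wbar size_takel //; lia.
  have := congr1 wb E; rewrite (wbar_cat g) Ez wbarK => <-.
  by rewrite -!catA -wbar_cat cat_take_drop /pump !wbar_cat !wbarK -!catA.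
have [_ not_final] := pump_drop_not_final (m := n) (leq_trans lt_g le_mn).
by move: in_L2; rewrite /dlang E dtrans_pump2 (negbTE not_final).
Qed.

Lemma pump_mixed_prefix m d : size w <= d * size v ->
  H (pump (m + d) ++ beta ++ wb (pump m)) -> prefix w (flatten (nseq d v)).
Proof.
move=> le_w [g [al [be [E [size_al in_L]]]]].
set P := u ++ flatten (nseq m v); set V := flatten (nseq d v).
have pumpD : pump (m + d) = P ++ V ++ w by rewrite /pump nseqD flatten_cat !catA.
have pumpm : pump m = P ++ w by rewrite /pump catA.
have size_V : size V = d * size v by apply: size_flatten_nseq.
have le_mn : size (pump m) <= size (pump (m + d)).
  by rewrite pumpD pumpm !size_cat; lia.
have le_x : size (pump m) <= size (g ++ al).
  by rewrite size_cat; have := pump_mixed_cover le_mn E in_L; lia.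
have := take_wbar_mirror be le_x.
rewrite -E (wbar_cat (pump (m + d))) (wbar_cat beta) wbarK -catA take_size_cat //.
rewrite takel_cat // pumpD pumpm size_cat takeD take_size_cat // drop_size_cat //.
move/eqP; rewrite eqseq_cat // eqxx /= => /eqP Ew.
by rewrite prefixE {2}Ew takel_cat // size_V.
Qed.

(* Pigeonhole on a DFA for H: two pumpings u v^(ci), u v^(cj) reach the same
   state, and c = |w| + 1 makes v^(c(j-i)) longer than w. *)
Lemma pump_prefix_pow : v != [::] -> regular H -> exists n, prefix w (flatten (nseq n.+1 v)).
Proof.
move=> v_nonempty [B HB]; set c := (size w).+1.
pose state k := dtrans (dinit B) (u ++ flatten (nseq (c * k) v)).
have [i [j [lt_ij E]]] := fin_collision state.
have ji_gt0 : 0 < j - i by rewrite subn_gt0.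
have d_gt0 : 0 < c * (j - i) by rewrite muln_gt0 ji_gt0.
exists (c * (j - i)).-1; rewrite prednK //.
apply: (@pump_mixed_prefix (c * i)).
  have v_gt0 : 0 < size v by rewrite lt0n size_eq0.
  exact/ltnW/(leq_trans _ (leq_pmulr _ v_gt0))/(leq_trans _ (leq_pmulr _ ji_gt0)).
have pumpE k z : pump k ++ z = (u ++ flatten (nseq k v)) ++ w ++ z by rewrite /pump !catA.
apply/HB; move/HB: (pump_in_Hk (c * i)).
rewrite -mulnDr (subnKC (ltnW lt_ij)) (pumpE (c * i)) (pumpE (c * j)).
exact: dlang_cat_congr.
Qed.

End Pumping.

Local Notation inA := (@inA _ bar kappa A1 A2).
Local Notation arcA := (@arcA _ bar kappa A1 A2).
Local Notation pathA := (gpath inA arcA).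
Local Notation runA := (grun inA arcA).
Local Notation reachA := (@reachA _ bar kappa A1 A2).
Local Notation sccA := (@sccA _ bar kappa A1 A2).
Local Notation shortest_loop := (@shortest_loop _ bar kappa A1 A2).

Lemma arcA_inA a X Y : arcA a X Y -> inA X /\ inA Y.
Proof. by case=> ? []. Qed.

Lemma inA_isState X : inA X -> isState X.
Proof. by case=> [[I [w [_ H]]] _]; apply: gpath_end H. Qed.

Lemma pathA_upath X w Y : pathA X w Y -> upath X w Y.
Proof.
case=> xs [H E]; exists xs; split=> //.
by apply: grun_mono H => [Z|a Z Z' [_ [_]]] //; apply: inA_isState.
Qed.

Lemma pathA_cat X w1 w2 Y Z : pathA X w1 Y -> pathA Y w2 Z -> pathA X (w1 ++ w2) Z.
Proof. exact: (@gpath_cat _ _ _ _ arcA_inA). Qed.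

Lemma reachA_trans X Y Z : reachA X Y -> reachA Y Z -> reachA X Z.
Proof. by case=> [p Hp] [q Hq]; exists (p ++ q); apply: pathA_cat Hp Hq. Qed.

Lemma sccA_reach s X Y : sccA s -> X \in s -> Y \in s -> reachA X Y.
Proof.
case=> X0 [_ mem_s] X_s Y_s.
by apply: (@reachA_trans _ X0); [case/mem_s: X_s | case/mem_s: Y_s].
Qed.

Lemma sccA_closed s X Y : sccA s -> X \in s -> reachA X Y -> reachA Y X -> Y \in s.
Proof.
case=> X0 [_ mem_s] X_s XY YX; have [X0X XX0] := proj1 (mem_s X) X_s.
by apply/mem_s; split; [apply: reachA_trans X0X XY | apply: reachA_trans YX XX0].
Qed.

Lemma rawarc_source_eq a X1 X2 Y : rawarc a X1 Y -> rawarc a X2 Y ->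
  st_pair X1 = st_pair X2 -> X1 = X2.
Proof.
move=> arc1 arc2 EP; apply: st_eq => //.
- by case/rawarcP: arc1 => _ _ _ [-> _] _; case/rawarcP: arc2 => _ _ _ [-> _] _.
- by case/rawarcP: arc1 => _ _ _ [_ ->] _; case/rawarcP: arc2 => _ _ _ [_ ->] _.
- by rewrite (rawarc_level arc1) (rawarc_level arc2).
Qed.

(* The first component of a state is computed forwards from X, the other
   components backwards from the last state. *)
Lemma runA_inj X w xs1 xs2 : runA X w xs1 -> runA X w xs2 ->
  last X xs1 = last X xs2 -> xs1 = xs2.
Proof.
elim/last_ind: w xs1 xs2 => [|w a IH] xs1 xs2 run1 run2.
  by case: xs1 xs2 run1 run2 => [|? ?] [|? ?].
case/lastP: xs1 run1 => [|ys1 Z1] run1; first by have := grun_size run1; rewrite size_rcons.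
case/lastP: xs2 run2 => [|ys2 Z2] run2; first by have := grun_size run2; rewrite size_rcons.
rewrite !last_rcons => EZ; subst Z2.
have pair_last ys : runA X w ys ->
    st_pair (last X ys) = (dtrans (st_pair X).1 w, dtrans (st_pair X).2 w).
  by move=> R; apply/upath_pair/pathA_upath; exists ys.
have [R1 [_ [_ arc1]]] := grun_rcons arcA_inA run1.
have [R2 [_ [_ arc2]]] := grun_rcons arcA_inA run2.
suff E : last X ys1 = last X ys2 by rewrite (IH _ _ R1 R2 E).
by apply: rawarc_source_eq arc1 arc2 _; rewrite !pair_last.
Qed.

Lemma shortest_loop_run_uniq X v xs : shortest_loop X v -> runA X v xs ->
  last X xs = X -> uniq xs.
Proof.
case=> _ [_ v_min] run last_xs; apply/negPn/negP => /(uniqPn X)[i [j [lt_ij lt_j E]]].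
have [w1 [w2 [Ev size_w1 path1 run2 last2]]] := grun_split arcA_inA run (ltn_trans lt_ij lt_j).
have lt_k : j - i.+1 < size (drop i.+1 xs).
  by rewrite size_drop ltn_sub2r // (leq_ltn_trans lt_ij lt_j).
have [w3 [w4 [Ew2 size_w3 _ run4 last4]]] := grun_split arcA_inA run2 lt_k.
rewrite nth_drop subnKC // (set_nth_default X) // -E in run4 last4.
have loop : pathA X (w1 ++ w4) X.
  by apply: pathA_cat path1 _; exists (drop (j - i.+1).+1 (drop i.+1 xs)); rewrite last4 last2.
have := v_min _ _ loop; rewrite -size_eq0 size_cat size_w1 => /(_ isT).
by rewrite Ev Ew2 !size_cat size_w1 size_w3 leq_add2l addSn ltnNge leq_addl.
Qed.

Lemma loop_run_mem_sccA s X v xs : sccA s -> X \in s -> runA X v xs ->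
  last X xs = X -> {subset xs <= s}.
Proof.
move=> scc_s X_s run last_xs Y /(nthP X)[k lt_k <-].
have [w1 [w2 [_ _ path1 run2 last2]]] := grun_split arcA_inA run lt_k.
apply: sccA_closed scc_s X_s _ _; first by exists w1.
by exists w2, (drop k.+1 xs); rewrite last2.
Qed.

Section Regular.
Hypotheses (kappa_gt0 : 0 < kappa)
  (Hreg : regular (Hk bar kappa (dlang A1) (lbar bar (dlang A2)))).

Lemma loop_final_prefix X v w F : v != [::] -> pathA X v X -> upath X w F ->
  finalSt F -> exists n, prefix w (flatten (nseq n.+1 v)).
Proof.
move=> v_nonempty loop_v path_w F_final.
have [[I [u [I_init path_u]]] _] := gpath_start arcA_inA loop_v.
have [beta [beta1 beta2]] := isState_bridge (gpath_end path_w).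
have F_level : st_level F = kappa := F_final.
exact (pump_prefix_pow kappa_gt0 I_init path_u (pathA_upath loop_v)
  path_w F_level beta1 beta2 v_nonempty Hreg).
Qed.

Lemma shortest_loop_unique X v v' : shortest_loop X v -> shortest_loop X v' -> v' = v.
Proof.
case=> v_nonempty [loop_v v_min] [v'_nonempty [loop_v' v'_min]].
have [_ [F [w0 [F_final path_w0]]]] := gpath_start arcA_inA loop_v.
have [n pre] := loop_final_prefix v_nonempty loop_v
  (upath_cat (pathA_upath loop_v') path_w0) F_final.
have size_v' : size v' = 1 * size v.
  by rewrite mul1n; apply/eqP; rewrite eqn_leq v'_min // v_min.
by rewrite (prefix_flatten_nseq (catl_prefix pre) size_v') /= cats0.
Qed.

Lemma loop_pow_shortest X v p : shortest_loop X v -> pathA X p X ->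
  flatten (nseq (size v) p) = flatten (nseq (size p) v).
Proof.
case=> v_nonempty [loop_v _] loop_p.
have [_ [F [w0 [F_final path_w0]]]] := gpath_start arcA_inA loop_v.
have loop_pow := gpath_loop_pow arcA_inA (size v) loop_p.
have [n pre] := loop_final_prefix v_nonempty loop_v
  (upath_cat (pathA_upath loop_pow) path_w0) F_final.
by apply: prefix_flatten_nseq (catl_prefix pre) _; rewrite size_flatten_nseq mulnC.
Qed.

Lemma sccA_mem_shortest_loop_run s X v xs : sccA s -> X \in s -> shortest_loop X v ->
  runA X v xs -> last X xs = X -> forall B, B \in s -> B != X -> B \in xs.
Proof.
move=> scc_s X_s Hv run last_xs B B_s neq_BX.
have X_inA : inA X by case: Hv => _ [/(gpath_start arcA_inA)].
have [p [ps [run_p last_p]]] := sccA_reach scc_s X_s B_s.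
have [q [qs [run_q last_q]]] := sccA_reach scc_s B_s X_s.
have B_ps : B \in ps.
  case: ps run_p last_p => [|Y ys] _ /= last_p; last by rewrite -last_p mem_last.
  by rewrite last_p eqxx in neq_BX.
have run_pq : runA X (p ++ q) (ps ++ qs).
  by apply/(grun_cat arcA_inA _ _ _ (grun_size run_p)); rewrite last_p.
have last_pq : last X (ps ++ qs) = X by rewrite last_cat last_p.
have [run_W last_W] := grun_loop_pow arcA_inA (size v) X_inA run_pq last_pq.
have [run_V last_V] := grun_loop_pow arcA_inA (size (p ++ q)) X_inA run last_xs.
rewrite (loop_pow_shortest Hv (ex_intro _ _ (conj run_pq last_pq))) in run_W.
have v_gt0 : 0 < size v by case: Hv => v_nonempty _; rewrite lt0n size_eq0.
have pq_gt0 : 0 < size (p ++ q).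
  by rewrite size_cat -(grun_size run_p) ltn_addr // lt0n size_eq0; apply: contraTneq B_ps => ->.
have : B \in flatten (nseq (size v) (ps ++ qs)) by rewrite mem_flatten_nseq // mem_cat B_ps.
by rewrite (runA_inj run_W run_V (etrans last_W (esym last_V))) mem_flatten_nseq.
Qed.

Lemma card_sccA_shortest_loop s X v : sccA s -> X \in s -> shortest_loop X v -> #|s| = size v.
Proof.
move=> scc_s X_s Hv; have [_ [[xs [run last_xs]] _]] := Hv.
have X_xs : X \in xs.
  case: xs run last_xs => [|Y ys] run /= last_xs; last by rewrite -last_xs mem_last.
  by case: Hv => v_nonempty _; move: (grun_size run) v_nonempty => /esym/size0nil ->.
have s_xs : s =i xs.
  move=> Y; apply/idP/idP => [Y_s|]; last exact: loop_run_mem_sccA scc_s X_s run last_xs Y.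
  have [->|neq_YX] := eqVneq Y X; first exact: X_xs.
  exact: sccA_mem_shortest_loop_run scc_s X_s Hv run last_xs Y Y_s neq_YX.
by rewrite (eq_card s_xs) (card_uniqP (shortest_loop_run_uniq Hv run last_xs)) (grun_size run).
Qed.

End Regular.

End Construction.

End Alphabet.

Theorem lemma5 (Sigma : finType) (bar : Sigma -> Sigma)
  (bar_inv : involutive bar) (card_Sigma : 2 <= #|Sigma|)
  (kappa : nat) (kappa_pos : 0 < kappa)
  (A1 A2 : dfa Sigma)
  (Hreg : regular (Hk bar kappa (dlang A1) (lbar bar (dlang A2))))
  (s : {set St kappa A1 A2}) (Hs : nontrivial_sccA bar s)
  (As : St kappa A1 A2) (HAs : As \in s)
  (vs : seq Sigma) (Hvs : shortest_loop bar As vs) :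
  (forall (w : seq Sigma) (F : St kappa A1 A2),
      pathA bar As w F -> finalSt F ->
      exists n, prefix w (flatten (nseq n.+1 vs))) /\
  (forall v, shortest_loop bar As v -> v = vs) /\
  (forall xs, runA bar As vs xs -> last As xs = As ->
      forall B, B \in s -> B != As -> count_mem B xs = 1) /\
  size vs = #|s|.
Proof.
have [scc_s _] := Hs; have [vs_nonempty [loop_vs _]] := Hvs.
split; [|split; [|split]].
- move=> w F /pathA_upath path_w F_final.
  exact: (loop_final_prefix bar_inv kappa_pos Hreg vs_nonempty loop_vs path_w F_final).
- by move=> v Hv; exact: (shortest_loop_unique bar_inv kappa_pos Hreg Hvs Hv).
- move=> xs run last_xs B B_s neq_BAs.
  have B_xs := sccA_mem_shortest_loop_run bar_inv kappa_pos Hreg scc_s HAs Hvs run last_xs.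
  by rewrite count_uniq_mem ?(shortest_loop_run_uniq Hvs run last_xs) ?B_xs.
- by rewrite (card_sccA_shortest_loop bar_inv kappa_pos Hreg scc_s HAs Hvs).
Qed.
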